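(* Let $T^\ast$ be the minimal matrix representation of a $0/1$-triangle $\mathcal{T}$ in $[0,1]^n$, written (as is always possible) with nonnegative integers $a,b,c,d$, $a+b+c+d=n$, such that the first $a$ rows of $T^\ast$ are $(0,1,1)$, the next $b$ rows $(0,1,0)$, the next $c$ rows $(0,0,1)$ and the last $d$ rows $(0,0,0)$, where $1\le a+b$, $a\le b\le c$. Then: if $a=0$, $\mathcal{T}$ is a right triangle; if $a>0$, $\mathcal{T}$ has acute angles only.
   Context: A $0/1$-triangle in $[0,1]^n$ is the convex hull of three distinct points of $\{0,1\}^n$. Column number of $x\in\{0,1\}^n$: $(2^0,\dots,2^{n-1})x$. For an $n\times k$ $0/1$-matrix $P$ with distinct columns, $\nu(P)$ is the increasingly sorted vector of its column numbers. $P$ is a minimal matrix representation if its column numbers are strictly increasing left to right and $\nu(P)\preceq\nu(Q)$ lexicographically for every $Q$ obtained from $P$ by complementing some subset of its rows and then permuting its rows. *)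

From mathcomp Require Import all_boot all_order all_algebra perm.
Set Implicit Arguments. Unset Strict Implicit. Unset Printing Implicit Defensive.

(* Points of {0,1}^n are finite functions 'I_n -> bool (true = 1). *)
Definition pt (n : nat) := {ffun 'I_n -> bool}.

Definition colnum (n k : nat) (P : 'M[bool]_(n, k)) (j : 'I_k) : nat :=
  \sum_(i < n) 2 ^ i * P i j.

Definition nu (n k : nat) (P : 'M[bool]_(n, k)) : seq nat :=
  sort leq [seq colnum P j | j <- enum 'I_k].

Fixpoint lexle (s t : seq nat) : bool :=
  match s, t with
  | [::], _ => true
  | _ :: _, [::] => false
  | x :: s', y :: t' => (x < y) || ((x == y) && lexle s' t')
  end.

Definition rowop (n k : nat) (s : {perm 'I_n}) (f : 'I_n -> bool)
  (P : 'M[bool]_(n, k)) : 'M[bool]_(n, k) :=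
  \matrix_(i, j) xorb (P (s i) j) (f (s i)).

Definition minimal_rep (n k : nat) (P : 'M[bool]_(n, k)) : Prop :=
  (forall j1 j2 : 'I_k, j1 < j2 -> colnum P j1 < colnum P j2) /\
  (forall (s : {perm 'I_n}) (f : 'I_n -> bool), lexle (nu P) (nu (rowop s f P))).

Definition col_pt (n k : nat) (P : 'M[bool]_(n, k)) (j : 'I_k) : pt n :=
  [ffun i => P i j].

Definition cube_map (n : nat) (s : {perm 'I_n}) (f : 'I_n -> bool) (x : pt n) : pt n :=
  [ffun i => xorb (x (s i)) (f (s i))].

(* P is a minimal matrix representation of the triangle conv{x,y,z}:
   P is minimal and its columns are (in some order) the images of the vertices
   under one row-complementation/row-permutation. *)
Definition min_rep_of (n : nat) (P : 'M[bool]_(n, 3)) (x y z : pt n) : Prop :=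
  minimal_rep P /\
  exists (s : {perm 'I_n}) (f : 'I_n -> bool),
    perm_eq [:: col_pt P (@Ordinal 3 0 isT); col_pt P (@Ordinal 3 1 isT);
                col_pt P (@Ordinal 3 2 isT)]
            [:: cube_map s f x; cube_map s f y; cube_map s f z].

Definition dotd (n : nat) (w u v : pt n) : int :=
  (\sum_(i < n) ((u i)%:Z - (w i)%:Z) * ((v i)%:Z - (w i)%:Z))%R.

(* Angle at vertex w of the triangle with other vertices u, v is right iff the
   inner product of the edge vectors is 0, acute iff it is positive. *)
Definition right_triangle (n : nat) (x y z : pt n) : Prop :=
  dotd x y z = 0%R \/ dotd y x z = 0%R \/ dotd z x y = 0%R.

Definition acute_triangle (n : nat) (x y z : pt n) : Prop :=
  (0 < dotd x y z)%R /\ (0 < dotd y x z)%R /\ (0 < dotd z x y)%R.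

Definition row_pattern (n : nat) (P : 'M[bool]_(n, 3)) (a b c : nat) : Prop :=
  forall (i : 'I_n) (j : 'I_3),
    P i j = if i < a then (j != 0 :> nat)
            else if i < a + b then (j == 1 :> nat)
            else if i < a + b + c then (j == 2 :> nat)
            else false.

(** The inner product of the two edge vectors at a vertex of a 0/1-triangle
  counts the coordinates in which both other vertices differ from it.  These
  counts are unchanged by complementing and permuting coordinates, and for the
  columns of [T*] they are [a], [b] and [c]: the rows [(0,1,1)], [(0,1,0)] and
  [(0,0,1)] respectively.  So some angle is right iff [a = 0], and all angles
  are acute once [a > 0], since [a <= b <= c]. *)

From mathcomp Require Import all_boot all_order all_algebra perm zify.
Import GRing.Theory Num.Theory.

Set Implicit Arguments.
Unset Strict Implicit.
Unset Printing Implicit Defensive.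

Lemma perm_eq2 (T : eqType) (p q u v : T) :
  perm_eq [:: p; q] [:: u; v] -> (u, v) = (p, q) \/ (u, v) = (q, p).
Proof.
move=> pqr; have : p \in [:: u; v] by rewrite -(perm_mem pqr) mem_head.
rewrite !inE => /orP[/eqP pu|/eqP pv]; rewrite -?pu -?pv in pqr *.
  by move: pqr; rewrite perm_cons => /perm_small_eq-/(_ isT)[->]; left.
have : perm_eq [:: p; q] [:: p; u].
  by apply: (perm_trans pqr); rewrite (perm_catC [:: u]).
by rewrite perm_cons => /perm_small_eq-/(_ isT)[->]; right.
Qed.

Lemma perm_eq3 (T : eqType) (p q r u v w : T) :
  perm_eq [:: p; q; r] [:: u; v; w] ->
  (u, v, w) = (p, q, r) \/ (u, v, w) = (p, r, q) \/ (u, v, w) = (q, p, r) \/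
  (u, v, w) = (q, r, p) \/ (u, v, w) = (r, p, q) \/ (u, v, w) = (r, q, p).
Proof.
move=> pqr; have : u \in [:: p; q; r] by rewrite (perm_mem pqr) mem_head.
rewrite !inE => /or3P[] /eqP eu; rewrite {}eu in pqr *.
- by move: pqr; rewrite perm_cons => /perm_eq2[[-> ->]|[-> ->]]; tauto.
- have : perm_eq [:: q; p; r] [:: q; v; w].
    by rewrite (perm_catCA [:: q] [:: p]).
  by rewrite perm_cons => /perm_eq2[[-> ->]|[-> ->]]; tauto.
- have : perm_eq [:: r; p; q] [:: r; v; w].
    by rewrite (perm_catC [:: r]).
  by rewrite perm_cons => /perm_eq2[[-> ->]|[-> ->]]; tauto.
Qed.

Lemma sum_ord_interval (n m p : nat) :
  \sum_(i < n) (m <= i < p) = minn p n - minn m n.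
Proof.
elim: n => [|n IHn]; first by rewrite big_ord0; lia.
by rewrite big_ord_recr /= IHn; case: (leqP m n); case: (ltnP n p) => /=; lia.
Qed.

Section Angles.
Variable n : nat.
Implicit Types (x y z u v w : pt n).

Definition angles x y z : seq int := [:: dotd x y z; dotd y x z; dotd z x y].

Lemma right_triangleE x y z : right_triangle x y z <-> 0%R \in angles x y z.
Proof.
rewrite !inE /right_triangle.
by split=> [[|[]] ->|/or3P[]/eqP]; rewrite ?eqxx ?orbT; auto.
Qed.

Lemma acute_triangleE x y z :
  acute_triangle x y z <-> all (fun t => 0 < t)%R (angles x y z).
Proof. by rewrite /acute_triangle /= andbT; split=> [[-> [-> ->]] | /and3P[]]. Qed.

Lemma dotdC w u v : dotd w u v = dotd w v u.
Proof. by apply: eq_bigr => i _; rewrite mulrC. Qed.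

Lemma dotd_count w u v :
  dotd w u v = Posz (\sum_i ((w i != u i) && (w i != v i))).
Proof.
rewrite /dotd (big_morph Posz PoszD (erefl _)).
by apply: eq_bigr => i _; case: (u i); case: (v i); case: (w i).
Qed.

Lemma dotd_cube_map s f w u v :
  dotd (cube_map s f w) (cube_map s f u) (cube_map s f v) = dotd w u v.
Proof.
rewrite !dotd_count (reindex_inj (@perm_inj _ s^-1)) /=.
congr Posz; apply: eq_bigr => i _; rewrite !ffunE permKV.
by case: (f i); case: (u i); case: (v i); case: (w i).
Qed.

Lemma angles_cube_map s f x y z :
  angles (cube_map s f x) (cube_map s f y) (cube_map s f z) = angles x y z.
Proof. by rewrite /angles !dotd_cube_map. Qed.

Lemma perm_angles x y z u v w :
  perm_eq [:: x; y; z] [:: u; v; w] -> perm_eq (angles x y z) (angles u v w).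
Proof.
case/perm_eq3 => [|[|[|[|[]]]]] [-> -> ->];
  rewrite /angles ?(dotdC x z y) ?(dotdC y z x) ?(dotdC z y x);
  apply/seq.permP => P /=; lia.
Qed.

Lemma angles_row_pattern a b c d (P : 'M[bool]_(n, 3)) :
  a + b + c + d = n -> row_pattern P a b c ->
  angles (col_pt P (@Ordinal 3 0 isT)) (col_pt P (@Ordinal 3 1 isT))
         (col_pt P (@Ordinal 3 2 isT)) = [:: Posz a; Posz b; Posz c].
Proof.
move=> abcd Pabc; rewrite /angles !dotd_count.
have row_count (lo hi : nat) (j k l : 'I_3) :
    (forall i : 'I_n, (P i j != P i k) && (P i j != P i l) = (lo <= i < hi)) ->
    hi <= n ->
    \sum_i ((col_pt P j i != col_pt P k i) && (col_pt P j i != col_pt P l i)) =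
    hi - minn lo n.
  move=> rows hi_n; under eq_bigr do rewrite !ffunE rows.
  by rewrite sum_ord_interval (minn_idPl hi_n).
congr [:: Posz _; Posz _; Posz _];
  [rewrite (row_count 0 a) | rewrite (row_count a (a + b))
  | rewrite (row_count (a + b) (a + b + c))]; try lia;
  move=> i; rewrite !Pabc /=;
  by case: (ltnP i a); case: (ltnP i (a + b)); case: (ltnP i (a + b + c)); lia.
Qed.

End Angles.

Theorem corollary4p16 (n : nat) (x y z : pt n) (Tstar : 'M[bool]_(n, 3))
  (a b c d : nat) :
  x != y -> x != z -> y != z ->
  min_rep_of Tstar x y z ->
  a + b + c + d = n ->
  row_pattern Tstar a b c ->
  1 <= a + b -> a <= b -> b <= c ->
  (a = 0 -> right_triangle x y z) /\ (0 < a -> acute_triangle x y z).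
Proof.
move=> _ _ _ [_ [s [f cols_vertices]]] abcd Tabc _ le_ab le_bc.
have angles_abc : perm_eq [:: Posz a; Posz b; Posz c] (angles x y z).
  rewrite -(angles_row_pattern abcd Tabc) -(angles_cube_map s f x y z).
  exact: perm_angles.
rewrite right_triangleE acute_triangleE -(perm_mem angles_abc) -(perm_all _ angles_abc).
split=> [-> | a_gt0]; first by rewrite mem_head.
by rewrite /= !ltz_nat; lia.
Qed.
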